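(* Let $G$ be a connected graph with infinitely many nodes such that ${}^{*}G$ has a hypernode not in its principal galaxy $\Gamma_0$. Let $\Gamma_a,\Gamma_b,\Gamma_c$ be galaxies of ${}^{*}G$ different from $\Gamma_0$. If $\Gamma_a$ is closer to $\Gamma_0$ than is $\Gamma_b$, and $\Gamma_b$ is closer to $\Gamma_0$ than is $\Gamma_c$, then $\Gamma_a$ is closer to $\Gamma_0$ than is $\Gamma_c$. Thus the set of galaxies is partially ordered according to closeness to $\Gamma_0$.
   Context: Conventions. $G=\{X,B\}$ is a graph whose branches are two-element subsets of $X$, and $d$ is the graph distance. Fix a free ultrafilter $\mathcal F$ on $\mathbb N$. Hypernodes and enlargement. Hypernodes are classes $[x_n]$ of node sequences, with two sequences identified when they agree on a set in $\mathcal F$. A standard hypernode is the class of a constant sequence. ${}^{*}G$ consists of the hypernodes and the hyperbranches $[\{x_n,y_n\}]$ with $\{n:\{x_n,y_n\}\in B\}\in\mathcal F$. Galaxies. Hypernodes $[x_n]$ and $[y_n]$ are limitedly distant if $\{n:d(x_n,y_n)\le k\}\in\mathcal F$ for some $k\in\mathbb N$. Galaxies are the classes of this equivalence relation, together with the hyperbranches between their hypernodes. The principal galaxy $\Gamma_0$ contains the standard hypernodes. Closeness. For galaxies $\Gamma_a,\Gamma_b\ne\Gamma_0$, $\Gamma_a$ is closer to $\Gamma_0$ than is $\Gamma_b$ if there exist ${\bf y}=[y_n]\in\Gamma_a$, ${\bf z}=[z_n]\in\Gamma_b$ and ${\bf x}=[x_n]\in\Gamma_0$ such that for every $m\in\mathbb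 N$, $\{n: d(z_n,x_n)-d(y_n,x_n)\ge m\}\in\mathcal F$. *)

From Stdlib Require Import Arith Lia List Classical ClassicalEpsilon.

Set Implicit Arguments.

Record free_ultrafilter (F : (nat -> Prop) -> Prop) : Prop := {
  uf_full : F (fun _ => True);
  uf_not_empty : ~ F (fun _ => False);
  uf_upward : forall A B : nat -> Prop, F A -> (forall n, A n -> B n) -> F B;
  uf_inter : forall A B : nat -> Prop, F A -> F B -> F (fun n => A n /\ B n);
  uf_ultra : forall A : nat -> Prop, F A \/ F (fun n => ~ A n);
  uf_free : forall l : list nat, ~ F (fun n => In n l)
}.

(* A graph {X,B}: the branch {x,y} is present iff E x y; E is symmetric and
   irreflexive (branches are two-element subsets). *)
Definition simple_graph (X : Type) (E : X -> X -> Prop) : Prop :=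
  (forall x y, E x y -> E y x) /\ (forall x, ~ E x x).

Fixpoint walk (X : Type) (E : X -> X -> Prop) (n : nat) (x y : X) : Prop :=
  match n with
  | 0 => x = y
  | S k => exists z, E x z /\ walk E k z y
  end.

Definition connected (X : Type) (E : X -> X -> Prop) : Prop :=
  forall x y, exists n, walk E n x y.

Definition infinitely_many_nodes (X : Type) : Prop :=
  ~ exists l : list X, forall x, In x l.

Lemma least_exists (P : nat -> Prop) :
  (exists n, P n) -> exists n, P n /\ forall m, P m -> n <= m.
Proof.
  intros [n Hn].
  induction n as [n IH] using lt_wf_ind.
  destruct (classic (exists m, m < n /\ P m)) as [[m [Hm Pm]]|Hno].
  - exact (IH m Hm Pm).
  - exists n; split; [exact Hn|].
    intros m Pm; destruct (le_gt_dec n m) as [|Hlt]; [assumption|].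
    exfalso; apply Hno; eauto.
Qed.

(* Graph distance d(x,y): the least length of a walk from x to y
   (0 by convention if there is none, which never happens for connected G). *)
Definition dist (X : Type) (E : X -> X -> Prop) (x y : X) : nat :=
  match excluded_middle_informative (exists n, walk E n x y) with
  | left H => proj1_sig (constructive_indefinite_description _ (least_exists _ H))
  | right _ => 0
  end.

(* Hypernodes are represented by node sequences nat -> X; all notions below
   are invariant under F-a.e. equality, so they are notions on hypernodes. *)

Definition lim_dist (X : Type) (E : X -> X -> Prop) (F : (nat -> Prop) -> Prop)
  (u v : nat -> X) : Prop :=
  exists k : nat, F (fun n => dist E (u n) (v n) <= k).

Definition is_galaxy (X : Type) (E : X -> X -> Prop) (F : (nat -> Prop) -> Prop)
  (Gam : (nat -> X) -> Prop) : Prop :=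
  exists u, forall v, Gam v <-> lim_dist E F u v.

Definition Gamma0 (X : Type) (E : X -> X -> Prop) (F : (nat -> Prop) -> Prop)
  (v : nat -> X) : Prop :=
  exists x0 : X, lim_dist E F (fun _ => x0) v.

(* Ga is closer to Gamma0 than Gb:
   exists y in Ga, z in Gb, x in Gamma0, forall m,
   {n | d(z_n,x_n) - d(y_n,x_n) >= m} in F
   (the integer inequality d(z,x) - d(y,x) >= m, m in N, is written
    d(y,x) + m <= d(z,x)). *)
Definition closer (X : Type) (E : X -> X -> Prop) (F : (nat -> Prop) -> Prop)
  (Ga Gb : (nat -> X) -> Prop) : Prop :=
  exists y z x : nat -> X, Ga y /\ Gb z /\ Gamma0 E F x /\
    forall m : nat, F (fun n => dist E (y n) (x n) + m <= dist E (z n) (x n)).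

(** The witnesses of "[Γa] is closer than [Γb]" and "[Γb] is closer than
    [Γc]" can be glued: the two base points lie in [Γ0] and the two points
    chosen in [Γb] lie in one galaxy, so each pair is a limited distance
    apart.  Moving an argument of [d(z,x) - d(y,x)] by a limited amount
    changes it by a limited amount (triangle inequality), so the gap
    [d(z₂,x₁) - d(z₁,x₁)] is still unlimited, and adding it to the unlimited
    gap [d(z₁,x₁) - d(y₁,x₁)] gives the claim. *)
From Stdlib Require Import Arith Lia ClassicalEpsilon.

Set Implicit Arguments.

Section GraphDistance.
Variable X : Type.
Variable E : X -> X -> Prop.
Hypothesis E_sym : forall x y, E x y -> E y x.
Hypothesis E_connected : connected E.

Lemma walk_cat m n x y z : walk E m x y -> walk E n y z -> walk E (m + n) x z.
Proof.
  revert x; induction m as [|m IH]; intros x Hxy Hyz; simpl in *.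
  - now subst.
  - destruct Hxy as [w [Exw Hwy]]; exists w; split; auto.
Qed.

Lemma walk_sym n x y : walk E n x y -> walk E n y x.
Proof.
  revert x; induction n as [|n IH]; intros x Hxy; simpl in *.
  - now subst.
  - destruct Hxy as [w [Exw Hwy]].
    change (walk E (S n) y x); replace (S n) with (n + 1) by lia.
    apply walk_cat with w; [now apply IH | exists x; simpl; auto].
Qed.

Lemma walk_dist x y : walk E (dist E x y) x y.
Proof.
  unfold dist; destruct (excluded_middle_informative _) as [Hex|Hnot].
  - destruct (constructive_indefinite_description _ _) as [k Hk]; exact (proj1 Hk).
  - exfalso; apply Hnot, E_connected.
Qed.

Lemma dist_minimal n x y : walk E n x y -> dist E x y <= n.
Proof.
  intro Hn; unfold dist; destruct (excluded_middle_informative _) as [Hex|Hnot].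
  - destruct (constructive_indefinite_description _ _) as [k Hk]; exact (proj2 Hk n Hn).
  - exfalso; eauto.
Qed.

Lemma dist_triangle x y z : dist E x z <= dist E x y + dist E y z.
Proof. apply dist_minimal, walk_cat with y; apply walk_dist. Qed.

Lemma dist_sym x y : dist E x y = dist E y x.
Proof.
  apply Nat.le_antisymm; apply dist_minimal, walk_sym, walk_dist.
Qed.

End GraphDistance.

Section Galaxies.
Variable X : Type.
Variable E : X -> X -> Prop.
Hypothesis E_sym : forall x y, E x y -> E y x.
Hypothesis E_connected : connected E.
Variable F : (nat -> Prop) -> Prop.
Hypothesis F_full : F (fun _ => True).
Hypothesis F_mono : forall A B : nat -> Prop, F A -> (forall n, A n -> B n) -> F B.
Hypothesis F_and : forall A B : nat -> Prop, F A -> F B -> F (fun n => A n /\ B n).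

Notation d := (dist E).
Notation lim_dist := (lim_dist E F).

Lemma lim_dist_sym u v : lim_dist u v -> lim_dist v u.
Proof.
  intros [k Hk]; exists k; apply F_mono with (1 := Hk).
  intro n; now rewrite (dist_sym E_sym E_connected).
Qed.

Lemma lim_dist_trans u v w : lim_dist u v -> lim_dist v w -> lim_dist u w.
Proof.
  intros [k Hk] [l Hl]; exists (k + l); apply F_mono with (1 := F_and Hk Hl).
  intros n [Hk' Hl']; pose proof (dist_triangle E_connected (u n) (v n) (w n)); lia.
Qed.

Lemma lim_dist_const (x x' : X) : lim_dist (fun _ => x) (fun _ => x').
Proof. exists (d x x'); now apply F_mono with (1 := F_full). Qed.

Lemma galaxy_lim_dist (Gam : (nat -> X) -> Prop) v w :
  is_galaxy E F Gam -> Gam v -> Gam w -> lim_dist v w.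
Proof.
  intros [u Hu] Hv Hw; apply lim_dist_trans with u;
    [apply lim_dist_sym, Hu | apply Hu]; assumption.
Qed.

Lemma Gamma0_lim_dist v w : Gamma0 E F v -> Gamma0 E F w -> lim_dist v w.
Proof.
  intros [x [k Hx]] [x' [l Hx']].
  apply lim_dist_trans with (fun _ => x); [now apply lim_dist_sym; exists k|].
  apply lim_dist_trans with (fun _ => x'); [apply lim_dist_const | now exists l].
Qed.

(* [unlimited_gap y z x]: the hyperinteger [d(z,x) - d(y,x)] is unlimited. *)
Definition unlimited_gap (y z x : nat -> X) : Prop :=
  forall m : nat, F (fun n => d (y n) (x n) + m <= d (z n) (x n)).

Lemma unlimited_gap_trans y z w x :
  unlimited_gap y z x -> unlimited_gap z w x -> unlimited_gap y w x.
Proof.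
  intros Hyz Hzw m; apply F_mono with (1 := F_and (Hyz m) (Hzw 0)).
  intros n [H1 H2]; lia.
Qed.

Lemma unlimited_gap_left y' y z x :
  lim_dist y' y -> unlimited_gap y z x -> unlimited_gap y' z x.
Proof.
  intros [k Hk] Hgap m; apply F_mono with (1 := F_and Hk (Hgap (m + k))).
  intros n [H1 H2]; pose proof (dist_triangle E_connected (y' n) (y n) (x n)); lia.
Qed.

Lemma unlimited_gap_base y z x x' :
  lim_dist x x' -> unlimited_gap y z x -> unlimited_gap y z x'.
Proof.
  intros [k Hk] Hgap m; apply F_mono with (1 := F_and Hk (Hgap (m + 2 * k))).
  intros n [H1 H2].
  pose proof (dist_triangle E_connected (y n) (x n) (x' n)).
  pose proof (dist_triangle E_connected (z n) (x' n) (x n)).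
  rewrite (dist_sym E_sym E_connected (x' n) (x n)) in *; lia.
Qed.

Lemma closer_trans (Ga Gb Gc : (nat -> X) -> Prop) :
  is_galaxy E F Gb -> closer E F Ga Gb -> closer E F Gb Gc -> closer E F Ga Gc.
Proof.
  intros HGb [y1 [z1 [x1 [Hy1 [Hz1 [Hx1 Hgap1]]]]]]
             [y2 [z2 [x2 [Hy2 [Hz2 [Hx2 Hgap2]]]]]].
  exists y1, z2, x1; repeat split; try assumption.
  apply unlimited_gap_trans with z1; [exact Hgap1|].
  apply unlimited_gap_left with y2; [exact (galaxy_lim_dist z1 y2 HGb Hz1 Hy2)|].
  apply unlimited_gap_base with x2; [exact (Gamma0_lim_dist Hx2 Hx1) | exact Hgap2].
Qed.

End Galaxies.

Theorem theorem4p3 (X : Type) (E : X -> X -> Prop) (F : (nat -> Prop) -> Prop)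
  (HF : free_ultrafilter F)
  (HG : simple_graph E)
  (Hconn : connected E)
  (Hinf : infinitely_many_nodes X)
  (Hnp : exists u : nat -> X, ~ Gamma0 E F u)
  (Ga Gb Gc : (nat -> X) -> Prop)
  (HGa : is_galaxy E F Ga) (HGb : is_galaxy E F Gb) (HGc : is_galaxy E F Gc)
  (Ha0 : ~ (forall v, Ga v <-> Gamma0 E F v))
  (Hb0 : ~ (forall v, Gb v <-> Gamma0 E F v))
  (Hc0 : ~ (forall v, Gc v <-> Gamma0 E F v)) :
  closer E F Ga Gb -> closer E F Gb Gc -> closer E F Ga Gc.
Proof.
  destruct HG as [E_sym _].
  apply (closer_trans E_sym Hconn (uf_full HF) (uf_upward HF) (uf_inter HF) HGb).
Qed.
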